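(* Let $\theta>1$, $r\in(\theta^{-1},\theta^{-1/2}]$ and $\beta=\frac{1-r^2\theta}{r\theta}\max\big(\frac1{1-r},\frac1{r\theta-1}\big)$. Let $(P_1,\dots,P_n)$ be a random price sequence with values in $[1,\theta]$ and maximum $P^*$, and $Y$ a random prediction with values in $[1,\theta]$ (arbitrary joint law). Then \[ \frac{\mathbb{E}[\mathsf{A}^1_r(P,Y)]}{\mathbb{E}[P^*]}\ \ge\ \max\Big\{r,\ \frac1{r\theta}-\beta\,\frac{\mathbb{E}\big[P^*\,|P^*-Y|\big]}{\mathbb{E}[P^*]}\Big\}. \]
   Context: One-max search: fix $\theta>1$. Prices $p_1,\dots,p_n\in[1,\theta]$ are revealed one at a time; the algorithm receives at the start a prediction $y\in[1,\theta]$ of the maximum price. At each step it irrevocably accepts the current price (payoff = that price) or rejects it; if nothing is accepted the payoff is $1$. Let $\varphi_r(z)=\frac{r\theta-1}{1-r}+\frac{1-r^2\theta}{1-r}\cdot\frac{z}{r\theta}$ and $\Phi^1_r(z)=\max(r\theta,\varphi_r(z))$; $\mathsf{A}^1_r$ accepts the first price $p_i\ge\Phi^1_r(y)$, and $\mathsf{A}^1_r(P,Y)$ is its payoff on the realized prices and prediction. *)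

From HB Require Import structures.
From mathcomp Require Import all_boot all_order all_algebra.
From mathcomp Require Import all_classical all_reals all_analysis.
Set Implicit Arguments. Unset Strict Implicit. Unset Printing Implicit Defensive.
Import Order.TTheory GRing.Theory Num.Theory.
Local Open Scope ring_scope.

Section OneMax.
Variable R : realType.

Definition phi_r (theta r z : R) : R :=
  (r * theta - 1) / (1 - r) + (1 - r ^+ 2 * theta) / (1 - r) * (z / (r * theta)).

Definition Phi1 (theta r z : R) : R := Num.max (r * theta) (phi_r theta r z).

Fixpoint threshold_payoff (thr : R) (s : seq R) : R :=
  match s with
  | [::] => 1
  | x :: s' => if thr <= x then x else threshold_payoff thr s'
  end.

Definition A1 (theta r : R) (s : seq R) (y : R) : R :=
  threshold_payoff (Phi1 theta r y) s.

Definition beta1 (theta r : R) : R :=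
  (1 - r ^+ 2 * theta) / (r * theta) * Num.max (1 - r)^-1 (r * theta - 1)^-1.

End OneMax.

(* Both bounds are integrated pointwise inequalities. Write m for the realized
   maximum, y for the prediction and a for the payoff of the threshold
   Phi = max(r theta, phi_r y): either Phi <= a, or nothing is accepted, a = 1
   and m < Phi.
   Robustness: phi_r is increasing with phi_r theta = 1/r, so Phi <= 1/r; hence
   r m < 1 = a in the second case, and r m <= r theta <= Phi <= a in the first.
   Consistency: phi_r z = K + c z/(r theta) with K + c = r theta, which gives
   phi_r y - m/(r theta) >= -(c/(r theta)) |m - y| for m <= theta, and
   K (m/(r theta) - 1) < (c/(r theta)) |m - y| when r theta < m < phi_r y.
   Since beta >= c/(r theta) and K beta >= c/(r theta), in both cases
   m/(r theta) - beta m |m - y| <= a.  Taking expectations and dividing by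
   E[P*] >= 1 gives the two terms of the maximum. *)

From HB Require Import structures.
From mathcomp Require Import all_boot all_order all_algebra.
From mathcomp Require Import all_classical all_reals all_analysis.
From mathcomp Require Import measurable_realfun ring lra.
Import Order.TTheory GRing.Theory Num.Theory.
Local Open Scope ring_scope.

Section SeqMax.
Context {disp : Order.disp_t} {T : orderType disp}.
Implicit Types (s : seq T).

Lemma bigmax_seq_le {x0 b : T} {s} :
  (x0 <= b)%O -> all (<= b)%O s -> (\big[Order.max/x0]_(x <- s) x <= b)%O.
Proof. by move=> x0_le /allP s_le; rewrite big_seq; apply: bigmax_le. Qed.

Lemma bigmax_seq_lt {x0 b : T} {s} :
  (x0 < b)%O -> all (< b)%O s -> (\big[Order.max/x0]_(x <- s) x < b)%O.
Proof. by move=> x0_lt /allP s_lt; rewrite big_seq; apply: bigmax_lt. Qed.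

End SeqMax.

Section ThresholdRule.
Context {R : realType}.
Implicit Types (thr : R) (s : seq R).

Lemma threshold_payoff_in (P : pred R) thr s :
  P 1 -> all P s -> P (threshold_payoff thr s).
Proof.
move=> P1; elim: s => [|x s IHs] //= /andP[Px Ps].
by case: ifP => _; [exact: Px | exact: IHs].
Qed.

Lemma threshold_payoff_cases thr s :
  (threshold_payoff thr s = 1 /\ all (< thr) s) \/ thr <= threshold_payoff thr s.
Proof.
elim: s => [|x s IHs] /=; first by left.
case: ifPn => [thr_le_x | ]; first by right.
rewrite -ltNge => x_lt; case: IHs => [[-> s_lt] | ]; last by right.
by left; rewrite x_lt s_lt.
Qed.

End ThresholdRule.

Lemma sqrM_le1_of_le_invsqrt {R : rcfType} {x t : R} :
  0 < t -> 0 <= x -> x <= (Num.sqrt t)^-1 -> x ^+ 2 * t <= 1.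
Proof.
move=> t_gt0 x_ge0; rewrite -div1r ler_pdivlMr ?sqrtr_gt0 // => xs_le1.
by rewrite -[t]sqr_sqrtr ?(ltW t_gt0) // -exprMn exprn_ile1 ?mulr_ge0 ?sqrtr_ge0.
Qed.

Section PointwiseBounds.
Context {R : realType} {theta r : R}.
Hypotheses (theta_gt1 : 1 < theta) (invtheta_lt_r : theta^-1 < r)
  (r2theta_le1 : r ^+ 2 * theta <= 1).

Let theta_gt0 : 0 < theta. Proof. exact: lt_trans theta_gt1. Qed.

Lemma r_gt0 : 0 < r.
Proof. by apply: lt_trans invtheta_lt_r; rewrite invr_gt0. Qed.

Lemma rtheta_gt1 : 1 < r * theta.
Proof. by rewrite -(mulVf (lt0r_neq0 theta_gt0)) ltr_pM2r. Qed.

Lemma r_lt1 : r < 1.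
Proof. have := rtheta_gt1; have := r_gt0; have := r2theta_le1; rewrite expr2; nra. Qed.

Let rtheta_gt0 : 0 < r * theta. Proof. exact: lt_trans rtheta_gt1. Qed.
Let onemr_gt0 : 0 < 1 - r. Proof. by rewrite subr_gt0 r_lt1. Qed.
Let onemr2theta_ge0 : 0 <= 1 - r ^+ 2 * theta. Proof. by rewrite subr_ge0. Qed.
Let r_neq0 : r != 0. Proof. exact: lt0r_neq0 r_gt0. Qed.
Let theta_neq0 : theta != 0. Proof. exact: lt0r_neq0 theta_gt0. Qed.
Let onemr_neq0 : 1 - r != 0. Proof. exact: lt0r_neq0 onemr_gt0. Qed.
Let rtheta_sub1_neq0 : r * theta - 1 != 0.
Proof. by rewrite lt0r_neq0 // subr_gt0 rtheta_gt1. Qed.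

Lemma rtheta_le_invr : r * theta <= r^-1.
Proof. by rewrite -div1r ler_pdivlMr ?r_gt0 // mulrAC -expr2. Qed.

Lemma phi_r_theta : phi_r theta r theta = r^-1.
Proof.
by rewrite /phi_r; field; rewrite r_neq0 theta_neq0 onemr_neq0.
Qed.

Lemma phi_r_homo : {homo phi_r theta r : y z / y <= z}.
Proof.
move=> y z yz; rewrite /phi_r lerD2l ler_wpM2l ?divr_ge0 ?(ltW onemr_gt0) //.
by rewrite ler_pM2r // invr_gt0.
Qed.

Lemma rtheta_le_Phi1 y : r * theta <= Phi1 theta r y.
Proof. by rewrite le_max lexx. Qed.

Lemma phi_r_le_Phi1 y : phi_r theta r y <= Phi1 theta r y.
Proof. by rewrite le_max lexx orbT. Qed.

Lemma Phi1_gt1 y : 1 < Phi1 theta r y.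
Proof. exact: lt_le_trans rtheta_gt1 (rtheta_le_Phi1 y). Qed.

Lemma Phi1_le_invr y : y <= theta -> Phi1 theta r y <= r^-1.
Proof. by move=> y_le; rewrite ge_max rtheta_le_invr -phi_r_theta phi_r_homo. Qed.

(* [phi_r z = K + c * (z / (r * theta))] *)
Local Notation K := ((r * theta - 1) / (1 - r)).
Local Notation c := ((1 - r ^+ 2 * theta) / (1 - r)).

Let K_gt0 : 0 < K. Proof. by rewrite divr_gt0 // subr_gt0 rtheta_gt1. Qed.
Let c_div_ge0 : 0 <= c / (r * theta). Proof. by rewrite !divr_ge0 // ltW. Qed.

Lemma c_div_le_beta1 : c / (r * theta) <= beta1 theta r.
Proof.
rewrite /beta1 mulrAC ler_wpM2l ?le_max ?lexx //.
by rewrite divr_ge0 // ltW.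
Qed.

Lemma c_div_le_K_beta1 : c / (r * theta) <= K * beta1 theta r.
Proof.
have -> : c / (r * theta) = K * ((1 - r ^+ 2 * theta) / (r * theta) * (r * theta - 1)^-1).
  by field; rewrite rtheta_sub1_neq0 theta_neq0 r_neq0 onemr_neq0.
rewrite ler_wpM2l ?(ltW K_gt0) // ler_wpM2l ?le_max ?lexx ?orbT //.
by rewrite divr_ge0 // ltW.
Qed.

Lemma beta1_ge0 : 0 <= beta1 theta r.
Proof. exact: le_trans c_div_le_beta1. Qed.

Lemma dev_le_phi_r m y :
  m <= theta -> m / (r * theta) - beta1 theta r * `|m - y| <= phi_r theta r y.
Proof.
move=> m_le; have -> : phi_r theta r y =
    m / (r * theta) + c / (r * theta) * (y - m) + K * (1 - m / theta).
  by rewrite /phi_r; field; rewrite r_neq0 theta_neq0 onemr_neq0.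
have offset_ge0 : 0 <= K * (1 - m / theta).
  by rewrite mulr_ge0 ?(ltW K_gt0) // subr_ge0 ler_pdivrMr ?mul1r.
have : c / (r * theta) * (m - y) <= beta1 theta r * `|m - y|.
  apply: le_trans (ler_wpM2r (normr_ge0 _) c_div_le_beta1).
  by rewrite ler_wpM2l // ler_norm.
rewrite -[y - m]opprB mulrN; lra.
Qed.

Lemma lt_phi_r_dev_le1 m y :
  m < phi_r theta r y -> m / (r * theta) - beta1 theta r * `|m - y| <= 1.
Proof.
have -> : phi_r theta r y =
    m + c / (r * theta) * (y - m) - K * (m / (r * theta) - 1).
  by rewrite /phi_r; field; rewrite r_neq0 theta_neq0 onemr_neq0.
move=> m_lt; have : K * (m / (r * theta) - 1) <= K * (beta1 theta r * `|m - y|).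
  apply: le_trans (_ : c / (r * theta) * `|m - y| <= _).
    by apply: le_trans (_ : c / (r * theta) * (y - m) <= _);
      [lra | rewrite ler_wpM2l // distrC ler_norm].
  by rewrite mulrA ler_wpM2r // c_div_le_K_beta1.
rewrite ler_pM2l //; lra.
Qed.

Lemma lt_Phi1_dev_le1 m y :
  m < Phi1 theta r y -> m / (r * theta) - beta1 theta r * `|m - y| <= 1.
Proof.
rewrite lt_max => /orP[m_lt | /lt_phi_r_dev_le1 //].
have dev_ge0 : 0 <= beta1 theta r * `|m - y| by rewrite mulr_ge0 ?beta1_ge0.
have : m / (r * theta) <= 1 by rewrite ler_pdivrMr ?mul1r ?ltW.
lra.
Qed.

Local Notation seqmax s := (\big[Num.max/1]_(x <- s) x).

Lemma A1_ge_robust s y : all (<= theta) s -> y <= theta ->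
  r * seqmax s <= A1 theta r s y.
Proof.
move=> s_le y_le; rewrite /A1.
have max_le : seqmax s <= theta by rewrite bigmax_seq_le ?ltW.
case: (threshold_payoff_cases (Phi1 theta r y) s) => [[-> s_lt] | Phi1_le].
  have max_lt : seqmax s < Phi1 theta r y by exact: bigmax_seq_lt (Phi1_gt1 y) s_lt.
  rewrite -[leRHS](mulfV r_neq0) ler_wpM2l ?(ltW r_gt0) //.
  exact: ltW (lt_le_trans max_lt (Phi1_le_invr _ y_le)).
apply: le_trans Phi1_le; apply: le_trans (rtheta_le_Phi1 y).
by rewrite ler_wpM2l ?(ltW r_gt0).
Qed.

Lemma A1_ge_consistent s y : all (<= theta) s ->
  seqmax s / (r * theta) - beta1 theta r * (seqmax s * `|seqmax s - y|)
    <= A1 theta r s y.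
Proof.
move=> s_le; rewrite /A1.
have max_le : seqmax s <= theta by rewrite bigmax_seq_le ?ltW.
apply: le_trans (_ : seqmax s / (r * theta) - beta1 theta r * `|seqmax s - y| <= _).
  by rewrite lerD2l lerN2 ler_wpM2l ?beta1_ge0 // ler_peMl // bigmax_ge_id.
case: (threshold_payoff_cases (Phi1 theta r y) s) => [[-> s_lt] | Phi1_le].
  exact: lt_Phi1_dev_le1 _ _ (bigmax_seq_lt (Phi1_gt1 y) s_lt).
exact: le_trans (dev_le_phi_r _ y max_le) (le_trans (phi_r_le_Phi1 y) Phi1_le).
Qed.

End PointwiseBounds.

Section BoundedIntegrals.
Context {R : realType} {d : measure_display} {T : measurableType d}.
Variable mu : {finite_measure set T -> \bar R}.
Implicit Types (f g h : T -> R) (a b lo hi : R).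

Lemma integrable_bounded {f lo hi} : measurable_fun setT f ->
  (forall x, lo <= f x <= hi) -> mu.-integrable setT (EFin \o f).
Proof.
move=> mf f_in; apply: measurable_bounded_integrable => //.
  by rewrite fin_num_fun_lty // fin_num_measure.
exists (`|lo| + `|hi|); split; first exact: num_real.
move=> M M_gt x _ /=; apply: le_trans (ltW M_gt).
have /andP[lo_le le_hi] := f_in x.
have := normr_ge0 lo; have := normr_ge0 hi; have := ler_norm hi.
have := ler_norm (- lo); rewrite normrN ler_norml; lra.
Qed.

Lemma integrableZl_EFin a {f} : mu.-integrable setT (EFin \o f) ->
  mu.-integrable setT (EFin \o (fun x => a * f x)).
Proof.
by move=> intf; apply: eq_integrable (integrableZl _ a intf) => // x _.
Qed.

Lemma le_Rintegral_lincomb a b {f g h} :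
  mu.-integrable setT (EFin \o f) -> mu.-integrable setT (EFin \o g) ->
  mu.-integrable setT (EFin \o h) -> (forall x, a * f x - b * g x <= h x) ->
  a * \int[mu]_x f x - b * \int[mu]_x g x <= \int[mu]_x h x.
Proof.
move=> intf intg inth le_h.
have intZf := integrableZl_EFin a intf; have intZg := integrableZl_EFin b intg.
rewrite -!RintegralZl // -RintegralB //; apply: le_Rintegral => //.
by apply: eq_integrable (integrableB _ intZf intZg) => // x _.
Qed.

End BoundedIntegrals.

Section Measurability.
Context {R : realType} {d : measure_display} {T : measurableType d} {I : Type}.
Implicit Types (F : I -> T -> R) (s : seq I).

Lemma measurable_bigmax (x0 : R) F s : (forall i, measurable_fun setT (F i)) ->
  measurable_fun setT (fun w => \big[Num.max/x0]_(i <- s) F i w).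
Proof.
move=> mF; elim: s => [|i s IHs].
  by under eq_fun do rewrite big_nil; exact: measurable_cst.
by under eq_fun do rewrite big_cons; exact: measurable_maxr.
Qed.

Lemma measurable_threshold_payoff (thr : T -> R) F s :
  measurable_fun setT thr -> (forall i, measurable_fun setT (F i)) ->
  measurable_fun setT (fun w => threshold_payoff (thr w) [seq F i w | i <- s]).
Proof.
move=> mthr mF; elim: s => [|i s IHs] /=; first exact: measurable_cst.
by apply: measurable_fun_ifT => //; exact: measurable_fun_ler.
Qed.

End Measurability.

Lemma measurable_Phi1 {R : realType} (theta r : R) :
  measurable_fun setT (Phi1 theta r).
Proof.
apply: measurable_maxr; first exact: measurable_cst.
apply: measurable_funD; first exact: measurable_cst.
apply: measurable_funM; first exact: measurable_cst.
by apply: measurable_funM => //; exact: measurable_cst.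
Qed.

Section RandomPrices.
Context {R : realType} {d : measure_display} {T : measurableType d}.
Variable Pr : probability T R.
Context {theta r : R} {n : nat} {p : 'I_n -> T -> R} {Y : T -> R}.
Hypotheses (theta_gt1 : 1 < theta) (invtheta_lt_r : theta^-1 < r)
  (r2theta_le1 : r ^+ 2 * theta <= 1).
Hypotheses (mp : forall i, measurable_fun setT (p i))
  (p_in : forall i w, 1 <= p i w <= theta).
Hypotheses (mY : measurable_fun setT Y) (Y_in : forall w, 1 <= Y w <= theta).

Let prices w := [seq p i w | i <- enum 'I_n].
Let Pstar w := \big[Num.max/1]_(i < n) p i w.
Let A w := A1 theta r (prices w) (Y w).
Let dev w := Pstar w * `|Pstar w - Y w|.

Let prices_le w : all (<= theta) (prices w).
Proof. by apply/allP => _ /mapP[i _ ->]; case/andP: (p_in i w). Qed.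

Let PstarE w : Pstar w = \big[Num.max/1]_(x <- prices w) x.
Proof. by rewrite big_map big_enum. Qed.

Let Pstar_in w : 1 <= Pstar w <= theta.
Proof. by rewrite PstarE bigmax_ge_id bigmax_seq_le ?ltW ?prices_le. Qed.

Let A_in w : 1 <= A w <= theta.
Proof.
apply: (threshold_payoff_in (fun x => 1 <= x <= theta)); first by rewrite lexx ltW.
by apply/allP => _ /mapP[i _ ->].
Qed.

Let dev_in w : 0 <= dev w <= theta * theta.
Proof.
have /andP[P_ge1 P_le] := Pstar_in w; have /andP[Y_ge1 Y_le] := Y_in w.
have : `|Pstar w - Y w| <= theta by rewrite ler_norml; lra.
have := normr_ge0 (Pstar w - Y w); rewrite /dev; nra.
Qed.

Let mPstar : measurable_fun setT Pstar.
Proof. exact: measurable_bigmax. Qed.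

Let iPstar : Pr.-integrable setT (EFin \o Pstar).
Proof. exact: integrable_bounded mPstar Pstar_in. Qed.

Let iA : Pr.-integrable setT (EFin \o A).
Proof.
apply: integrable_bounded A_in; apply: measurable_threshold_payoff => //.
exact: measurableT_comp (measurable_Phi1 _ _) mY.
Qed.

Let idev : Pr.-integrable setT (EFin \o dev).
Proof.
apply: integrable_bounded dev_in; apply: measurable_funM => //.
by apply: measurableT_comp => //; exact: measurable_funB.
Qed.

Lemma expectation_Pstar_ge1 : 1 <= \int[Pr]_w Pstar w.
Proof.
have <- : \int[Pr]_w (1 : R) = 1.
  have fine_Pr_setT : fine (Pr setT) = 1 by rewrite probability_setT.
  by rewrite Rintegral_cst // fine_Pr_setT mul1r.
apply: le_Rintegral => //; first exact: finite_measure_integrable_cst.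
by move=> w _; case/andP: (Pstar_in w).
Qed.

Lemma expectation_A1_ge_robust : r * \int[Pr]_w Pstar w <= \int[Pr]_w A w.
Proof.
rewrite -[leLHS]subr0 -(mul0r (\int[Pr]_w Pstar w)).
apply: le_Rintegral_lincomb => // w; rewrite mul0r subr0 PstarE.
by apply: A1_ge_robust => //; case/andP: (Y_in w).
Qed.

Lemma expectation_A1_ge_consistent :
  (r * theta)^-1 * \int[Pr]_w Pstar w - beta1 theta r * \int[Pr]_w dev w
    <= \int[Pr]_w A w.
Proof.
apply: le_Rintegral_lincomb => // w; rewrite /dev PstarE mulrC.
exact: A1_ge_consistent.
Qed.

End RandomPrices.

Theorem corollary8 (R : realType) (d : measure_display) (T : measurableType d)
    (Pr : probability T R) (theta r : R) (n : nat)
    (p : 'I_n -> T -> R) (Y : T -> R) :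
  1 < theta ->
  theta^-1 < r -> r <= (Num.sqrt theta)^-1 ->
  (0 < n)%N ->
  (forall i, measurable_fun setT (p i)) ->
  (forall i w, 1 <= p i w <= theta) ->
  measurable_fun setT Y ->
  (forall w, 1 <= Y w <= theta) ->
  let Pstar := fun w => \big[Num.max/1]_(i < n) p i w in
  let EA := Rintegral Pr setT
              (fun w => A1 theta r [seq p i w | i <- enum 'I_n] (Y w)) in
  let EP := Rintegral Pr setT Pstar in
  let EPdev := Rintegral Pr setT (fun w => Pstar w * `|Pstar w - Y w|) in
  Num.max r ((r * theta)^-1 - beta1 theta r * (EPdev / EP)) <= EA / EP.
Proof.
move=> theta_gt1 invtheta_lt_r r_le _ mp p_in mY Y_in; cbv zeta.
have r2theta_le1 : r ^+ 2 * theta <= 1.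
  apply: sqrM_le1_of_le_invsqrt r_le; first exact: lt_trans ltr01 theta_gt1.
  exact: ltW (r_gt0 theta_gt1 invtheta_lt_r).
have EP_gt0 := lt_le_trans ltr01 (expectation_Pstar_ge1 Pr theta_gt1 mp p_in).
have := expectation_A1_ge_robust Pr theta_gt1 invtheta_lt_r r2theta_le1 mp p_in mY Y_in.
have := expectation_A1_ge_consistent Pr theta_gt1 invtheta_lt_r r2theta_le1 mp p_in mY Y_in.
move=> consistent robust.
by rewrite ge_max !ler_pdivlMr // robust /= mulrBl -mulrA divfK ?lt0r_neq0.
Qed.
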